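(* For all integers $n\geq 1$, the rockers function $\lambda$ satisfies the asymptotic relation \[ \lambda(n)\sim \frac{n^{\,n-\frac{1}{2n}-\frac{1}{2}}\sqrt{2\pi}}{e^{\,n+\Psi(n)-1}}\qquad (n\to\infty), \] where \[ \Psi(n):=\int_{1}^{n-1}\frac{\sum_{1\leq j\leq t}\log (n-j)}{(t+1)^2}\,dt . \]
   Context: The rockers function $\lambda:\mathbb{N}\to\mathbb{R}^{+}$ is defined by $\lambda(1)=1$, $\lambda(2)=2$, and for $n\geq 3$, \[ \lambda(n)=2^{\frac{n-2}{n-1}}\,3^{\frac{n-3}{n-2}}\cdots (n-1)^{\frac{1}{2}}\, n=\prod_{k=0}^{n-2}(n-k)^{\frac{k}{k+1}} . \] Here $\log$ denotes the natural logarithm, the sum $\sum_{1\le j\le t}$ runs over integers $j$ with $1\le j\le t$ (for real $t$), and $f(n)\sim g(n)$ means $f(n)/g(n)\to 1$ as $n\to\infty$. *)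

From Stdlib Require Import Reals.
Open Scope R_scope.

(* Rockers function, following the explicit product
   lambda(n) = 2^{(n-2)/(n-1)} 3^{(n-3)/(n-2)} ... (n-1)^{1/2} n,
   i.e. n * prod_{k=0}^{n-2} (n-k)^{k/(k+1)} (the k = 0 factor equals 1). *)
Definition rockers (n : nat) : R :=
  match n with
  | O => 1            (* lambda is defined on N = {1,2,...}; value at 0 is irrelevant *)
  | 1%nat => 1
  | 2%nat => 2
  | _ => INR n * prod_f_R0 (fun k => Rpower (INR (n - k)) (INR k / INR (k + 1))) (n - 2)
  end.

(* Integrand of Psi(n):  t |-> (sum_{1 <= j <= t} log(n-j)) / (t+1)^2.
   Only integers j <= n+1 are summed; on [1, n-1] this is the full sum. *)
Definition psi_integrand (n : nat) (t : R) : R :=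
  sum_f_R0 (fun k => if Rle_dec (INR (S k)) t then ln (INR n - INR (S k)) else 0) n
  / (t + 1) ^ 2.

Definition rockers_asym (n : nat) (psi : R) : R :=
  Rpower (INR n) (INR n - 1 / (2 * INR n) - 1 / 2) * sqrt (2 * PI)
  / exp (INR n + psi - 1).

(* Since [int_j^(n-1) dt / (t+1)^2 = 1/(j+1) - 1/n], the integral [Psi(n)] is the
   finite sum [sum_(1 <= j <= n-2) ln (n-j) (1/(j+1) - 1/n)].  Added to
   [ln lambda(n) = ln n + sum_k k/(k+1) ln (n-k)] it telescopes termwise into
   [ln n + (1 - 1/n) ln (n-1)!], so the logarithm of the ratio in the theorem is
   [(1 - 1/n) s_n - ln (2 pi) / 2 + ln n / n] with [s_n = ln n! - (n + 1/2) ln n + n].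
   Stirling's formula [s_n -> ln (2 pi) / 2] holds because [s_n] decreases
   and is bounded below, by the bounds [2x <= ln ((1+x)/(1-x)) <= 2x + 2x^3/(3(1-x^2))],
   and its limit is identified through Wallis's integrals [int_0^(pi/2) sin^k]. *)

From Stdlib Require Import Reals Lra Lia Arith Factorial.
From Coquelicot Require Import Coquelicot.
Open Scope R_scope.

Lemma continuity_pt_ex_derive (f : R -> R) (x : R) :
  ex_derive f x -> continuity_pt f x.
Proof.
  intros Hf. apply continuity_pt_filterlim.
  exact (@ex_derive_continuous R_AbsRing R_NormedModule f x Hf).
Qed.

Lemma nonneg_of_deriv_nonneg (f df : R -> R) (x : R) :
  0 <= x -> f 0 = 0 ->
  (forall t, 0 <= t <= x -> is_derive f t (df t) /\ 0 <= df t) ->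
  0 <= f x.
Proof.
  intros Hx Hf0 Hd.
  destruct (MVT_gen f 0 x df) as [c [Hc E]];
    rewrite ?Rmin_left, ?Rmax_right in * by lra.
  - intros t Ht. apply Hd. lra.
  - intros t Ht. apply continuity_pt_ex_derive.
    exists (df t). apply Hd. exact Ht.
  - destruct (Hd c Hc) as [_ Hdc]. nra.
Qed.

Lemma is_lim_seq_inv_INR_plus (c : R) : 0 < c -> is_lim_seq (fun n => / (INR n + c)) 0.
Proof.
  intros Hc. replace (Finite 0) with (Rbar_inv p_infty) by reflexivity.
  apply is_lim_seq_inv; [|discriminate].
  eapply is_lim_seq_plus; [apply is_lim_seq_INR | apply is_lim_seq_const | reflexivity].
Qed.

(** * Wallis's product *)

Definition wallis_integral (k : nat) : R := RInt (fun x => sin x ^ k) 0 (PI / 2).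

Lemma ex_RInt_sin_pow (k : nat) (a b : R) : ex_RInt (fun x => sin x ^ k) a b.
Proof.
  apply (@ex_RInt_continuous R_CompleteNormedModule). intros z _.
  apply (@ex_derive_continuous R_AbsRing R_NormedModule). auto_derive. auto.
Qed.

Lemma wallis_integral_0 : wallis_integral 0 = PI / 2.
Proof.
  unfold wallis_integral. simpl. rewrite RInt_const.
  unfold scal; simpl; unfold mult; simpl. ring.
Qed.

Lemma wallis_integral_1 : wallis_integral 1 = 1.
Proof.
  assert (H : is_RInt (fun x => sin x ^ 1) 0 (PI / 2) (- cos (PI / 2) - - cos 0)).
  { apply (is_RInt_derive (fun x => - cos x)).
    - intros x _. auto_derive. auto. ring.
    - intros x _. apply (@ex_derive_continuous R_AbsRing R_NormedModule).
      auto_derive. auto. }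
  unfold wallis_integral. rewrite (is_RInt_unique _ _ _ _ H), cos_PI2, cos_0. ring.
Qed.

(* Integration by parts, written as the FTC for [- cos x sin^(k+1) x],
   whose derivative is [(k+2) sin^(k+2) x - (k+1) sin^k x]. *)
Lemma wallis_integral_rec (k : nat) :
  INR (k + 2) * wallis_integral (k + 2) = INR (k + 1) * wallis_integral k.
Proof.
  assert (H : is_RInt (fun x => INR (k + 2) * sin x ^ (k + 2) - INR (k + 1) * sin x ^ k)
                0 (PI / 2) (- cos (PI / 2) * sin (PI / 2) ^ (k + 1) - - cos 0 * sin 0 ^ (k + 1))).
  { apply (is_RInt_derive (fun x => - cos x * sin x ^ (k + 1))).
    - intros x _. auto_derive; [auto|].
      replace (k + 2)%nat with (S (S k)) by lia. replace (k + 1)%nat with (S k) by lia.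
      rewrite !S_INR. simpl. pose proof (sin2_cos2 x) as Hsc. unfold Rsqr in Hsc.
      match goal with |- ?L = ?R =>
        assert (E : L - R = (INR k + 1) * sin x ^ k * (1 - (sin x * sin x + cos x * cos x)))
          by ring end.
      rewrite Hsc in E. lra.
    - intros x _. apply (@ex_derive_continuous R_AbsRing R_NormedModule).
      auto_derive. auto. }
  rewrite cos_PI2, sin_0 in H. replace (k + 1)%nat with (S k) in H at 2 by lia.
  assert (HI : is_RInt (fun x => INR (k + 2) * sin x ^ (k + 2) - INR (k + 1) * sin x ^ k)
                 0 (PI / 2) (INR (k + 2) * wallis_integral (k + 2) - INR (k + 1) * wallis_integral k)).
  { apply (is_RInt_minus (V := R_NormedModule));
      apply (is_RInt_scal (V := R_NormedModule)); unfold wallis_integral;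
      apply (RInt_correct (V := R_CompleteNormedModule)), ex_RInt_sin_pow. }
  apply (is_RInt_unique (V := R_CompleteNormedModule)) in H.
  apply (is_RInt_unique (V := R_CompleteNormedModule)) in HI.
  rewrite HI in H. simpl in H. lra.
Qed.

Lemma wallis_integral_decr (k : nat) : wallis_integral (S k) <= wallis_integral k.
Proof.
  pose proof PI_RGT_0.
  apply RInt_le; [lra | apply ex_RInt_sin_pow | apply ex_RInt_sin_pow |].
  intros x Hx. simpl.
  assert (0 <= sin x) by (apply sin_ge_0; lra).
  pose proof (SIN_bound x). pose proof (pow_le (sin x) k ltac:(lra)). nra.
Qed.

(* [wallis_ratio n = (2n)! / (4^n n!^2) = prod_{i<n} (2i+1)/(2i+2)]. *)
Fixpoint wallis_ratio (n : nat) : R :=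
  match n with
  | O => 1
  | S n => wallis_ratio n * (2 * INR n + 1) / (2 * INR n + 2)
  end.

Lemma wallis_ratio_pos (n : nat) : 0 < wallis_ratio n.
Proof.
  induction n as [|n IHn]; simpl; [lra|]. pose proof (pos_INR n).
  apply Rdiv_lt_0_compat; [apply Rmult_lt_0_compat|]; lra.
Qed.

Lemma wallis_integral_even_odd (n : nat) :
  wallis_integral (2 * n) = PI / 2 * wallis_ratio n /\
  wallis_integral (2 * n + 1) = / ((2 * INR n + 1) * wallis_ratio n).
Proof.
  induction n as [|n [Heven Hodd]].
  - simpl. rewrite wallis_integral_0, wallis_integral_1. split; field.
  - pose proof (pos_INR n). pose proof (wallis_ratio_pos n).
    pose proof (wallis_integral_rec (2 * n)) as Reven.
    pose proof (wallis_integral_rec (2 * n + 1)) as Rodd.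
    replace (2 * n + 2)%nat with (2 * S n)%nat in Reven by lia.
    replace (2 * n + 1 + 2)%nat with (2 * S n + 1)%nat in Rodd by lia.
    replace (2 * n + 1 + 1)%nat with (2 * S n)%nat in Rodd by lia.
    replace (INR (2 * S n)) with (2 * INR n + 2) in Reven, Rodd
      by (rewrite ?plus_INR, ?mult_INR, ?S_INR; simpl (INR 0); ring).
    replace (INR (2 * n + 1)) with (2 * INR n + 1) in Reven
      by (rewrite ?plus_INR, ?mult_INR, ?S_INR; simpl (INR 0); ring).
    replace (INR (2 * S n + 1)) with (2 * INR n + 3) in Rodd
      by (rewrite ?plus_INR, ?mult_INR, ?S_INR; simpl (INR 0); ring).
    rewrite Heven in Reven. rewrite Hodd in Rodd.
    simpl wallis_ratio. rewrite S_INR.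
    split.
    + apply (Rmult_eq_reg_l (2 * INR n + 2)); [rewrite Reven; field|]; lra.
    + apply (Rmult_eq_reg_l (2 * INR n + 3)); [rewrite Rodd; field|]; lra.
Qed.

Lemma wallis_ratio_lower (n : nat) :
  2 <= PI * (2 * INR n + 1) * wallis_ratio n ^ 2.
Proof.
  destruct (wallis_integral_even_odd n) as [Heven Hodd].
  pose proof (wallis_integral_decr (2 * n)) as D.
  replace (S (2 * n)) with (2 * n + 1)%nat in D by lia.
  rewrite Heven, Hodd in D.
  pose proof (wallis_ratio_pos n). pose proof (pos_INR n).
  apply (Rmult_le_compat_l (2 * (2 * INR n + 1) * wallis_ratio n)) in D; [|nra].
  replace (2 * (2 * INR n + 1) * wallis_ratio n * / ((2 * INR n + 1) * wallis_ratio n))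
    with 2 in D by (field; lra).
  nra.
Qed.

Lemma wallis_ratio_upper (n : nat) :
  PI * (INR n + 1) * wallis_ratio (S n) ^ 2 <= 1.
Proof.
  destruct (wallis_integral_even_odd n) as [_ Hodd].
  destruct (wallis_integral_even_odd (S n)) as [Heven _].
  pose proof (wallis_integral_decr (2 * n + 1)) as D.
  replace (S (2 * n + 1)) with (2 * S n)%nat in D by lia.
  rewrite Heven, Hodd in D.
  pose proof (wallis_ratio_pos (S n)). pose proof (pos_INR n).
  replace ((2 * INR n + 1) * wallis_ratio n) with ((2 * INR n + 2) * wallis_ratio (S n)) in D
    by (simpl wallis_ratio; field; lra).
  apply (Rmult_le_compat_l (2 * (INR n + 1) * wallis_ratio (S n))) in D; [|nra].
  replace (2 * (INR n + 1) * wallis_ratio (S n) * / ((2 * INR n + 2) * wallis_ratio (S n)))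
    with 1 in D by (field; lra).
  nra.
Qed.

Lemma wallis_product : is_lim_seq (fun n => INR (S n) * wallis_ratio (S n) ^ 2) (/ PI).
Proof.
  pose proof PI_RGT_0.
  apply (is_lim_seq_le_le (fun n => / PI - / PI * / (2 * INR n + 3)) _ (fun n => / PI)).
  - intros n. pose proof (pos_INR n).
    pose proof (wallis_ratio_lower (S n)). pose proof (wallis_ratio_upper n).
    rewrite S_INR in *. split.
    + apply (Rmult_le_reg_l (PI * (2 * INR n + 3))); [nra|].
      replace (PI * (2 * INR n + 3) * (/ PI - / PI * / (2 * INR n + 3)))
        with (2 * INR n + 2) by (field; lra).
      nra.
    + apply (Rmult_le_reg_l PI); [lra|]. rewrite Rinv_r by lra. nra.
  - assert (L : is_lim_seq (fun n => / PI - / PI * (/ 2 * / (INR n + 3 / 2)))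
                  (/ PI - / PI * (/ 2 * 0))).
    { apply is_lim_seq_minus'; [apply is_lim_seq_const|].
      apply is_lim_seq_mult'; [apply is_lim_seq_const|].
      apply is_lim_seq_mult'; [apply is_lim_seq_const|].
      apply is_lim_seq_inv_INR_plus. lra. }
    rewrite Rmult_0_r, Rmult_0_r, Rminus_0_r in L.
    eapply is_lim_seq_ext; [|exact L]. intros n; cbv beta. pose proof (pos_INR n). field. lra.
  - apply is_lim_seq_const.
Qed.

(** * Stirling's formula *)

Lemma ln_1px_1mx_bounds (x : R) : 0 <= x < 1 ->
  2 * x <= ln (1 + x) - ln (1 - x) <= 2 * x + 2 * x ^ 3 / (3 * (1 - x ^ 2)).
Proof.
  intros Hx. split.
  - apply Rminus_le_0.
    apply (nonneg_of_deriv_nonneg (fun t => ln (1 + t) - ln (1 - t) - 2 * t)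
             (fun t => 2 * t ^ 2 / (1 - t ^ 2))); [lra | |].
    + rewrite Rplus_0_r, Rminus_0_r, ln_1. ring.
    + intros t Ht. split.
      * auto_derive; [lra|]. field. nra.
      * apply Rmult_le_pos; [nra|]. apply Rlt_le, Rinv_0_lt_compat. nra.
  - apply Rminus_le_0.
    apply (nonneg_of_deriv_nonneg
             (fun t => 2 * t + 2 * t ^ 3 / (3 * (1 - t ^ 2)) - (ln (1 + t) - ln (1 - t)))
             (fun t => 4 * t ^ 4 / (3 * (1 - t ^ 2) ^ 2))); [lra | |].
    + rewrite Rplus_0_r, Rminus_0_r, ln_1. field.
    + intros t Ht. assert (0 < 1 - t ^ 2) by nra. split.
      * auto_derive; [repeat split; nra|]. field. repeat split; nra.
      * apply Rmult_le_pos; [nra|]. apply Rlt_le, Rinv_0_lt_compat.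
        apply Rmult_lt_0_compat; [lra | apply pow_lt; lra].
Qed.

(* The substitution [x = 1 / (2y + 1)] turns [(1 + x) / (1 - x)] into [(y + 1) / y]. *)
Lemma stirling_step_bounds (y : R) : 1 <= y ->
  0 <= (y + / 2) * (ln (y + 1) - ln y) - 1 <= / 12 * (/ y - / (y + 1)).
Proof.
  intros Hy. set (x := / (2 * y + 1)).
  assert (Hx : 0 <= x < 1).
  { unfold x. split; [apply Rlt_le, Rinv_0_lt_compat; lra|].
    apply (Rmult_lt_reg_l (2 * y + 1)); [lra|]. rewrite Rinv_r; lra. }
  assert (E : ln (1 + x) - ln (1 - x) = ln (y + 1) - ln y).
  { replace (1 + x) with (2 * (y + 1) / (2 * y + 1)) by (unfold x; field; lra).
    replace (1 - x) with (2 * y / (2 * y + 1)) by (unfold x; field; lra).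
    rewrite !ln_div, !ln_mult by lra. ring. }
  destruct (ln_1px_1mx_bounds x Hx) as [L U]. rewrite E in L, U.
  assert (K1 : (y + / 2) * (2 * x) = 1) by (unfold x; field; lra).
  assert (K2 : (y + / 2) * (2 * x ^ 3 / (3 * (1 - x ^ 2))) = / 12 * (/ y - / (y + 1))).
  { unfold x. field. repeat split; try lra; intros H; nra. }
  apply (Rmult_le_compat_l (y + / 2)) in L; [|lra].
  apply (Rmult_le_compat_l (y + / 2)) in U; [|lra].
  rewrite Rmult_plus_distr_l in U. lra.
Qed.

Definition ln_fact (n : nat) : R := ln (INR (fact n)).

Lemma ln_fact_0 : ln_fact 0 = 0.
Proof. apply ln_1. Qed.

Lemma ln_fact_S (n : nat) : ln_fact (S n) = ln_fact n + ln (INR (S n)).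
Proof.
  unfold ln_fact. rewrite fact_simpl, mult_INR, ln_mult, Rplus_comm; [reflexivity| |].
  - apply lt_0_INR. lia.
  - apply INR_fact_lt_0.
Qed.

Lemma ln_fact_sum (N : nat) :
  ln_fact (S N) = sum_f_R0 (fun i => ln (INR (S N) - INR i)) N.
Proof.
  induction N as [|N IH].
  - rewrite ln_fact_S, ln_fact_0. simpl. rewrite Rminus_0_r. ring.
  - rewrite ln_fact_S, IH, (decomp_sum _ (S N)) by lia. simpl pred. simpl (INR 0).
    rewrite Rminus_0_r, Rplus_comm. f_equal. apply sum_eq. intros i _.
    rewrite (S_INR (S N)), (S_INR i). f_equal. ring.
Qed.

(* [ln n! - (n + 1/2) ln n + n] at [n = m + 1]. *)
Definition stirling_seq (m : nat) : R :=
  ln_fact (S m) - (INR (S m) + / 2) * ln (INR (S m)) + INR (S m).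

Lemma stirling_seq_step (m : nat) :
  stirling_seq m - stirling_seq (S m)
  = (INR (S m) + / 2) * (ln (INR (S m) + 1) - ln (INR (S m))) - 1.
Proof.
  unfold stirling_seq. rewrite (ln_fact_S (S m)), (S_INR (S m)). ring.
Qed.

Lemma stirling_seq_decr (m : nat) : stirling_seq (S m) <= stirling_seq m.
Proof.
  pose proof (stirling_seq_step m).
  pose proof (stirling_step_bounds (INR (S m)) (le_INR 1 (S m) ltac:(lia))). lra.
Qed.

Lemma stirling_seq_lower (m : nat) : 11 / 12 <= stirling_seq m.
Proof.
  assert (Htel : forall k, stirling_seq 0 - / 12 * (1 - / INR (S k)) <= stirling_seq k).
  { induction k as [|k IH]; [change (INR 1) with 1; rewrite Rinv_1; lra|].
    pose proof (stirling_seq_step k).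
    pose proof (stirling_step_bounds (INR (S k)) (le_INR 1 (S k) ltac:(lia))).
    rewrite (S_INR (S k)). lra. }
  assert (H0 : stirling_seq 0 = 1).
  { unfold stirling_seq. rewrite ln_fact_S, ln_fact_0. simpl. rewrite ln_1. ring. }
  assert (0 <= / INR (S m)) by (apply Rlt_le, Rinv_0_lt_compat, lt_0_INR; lia).
  specialize (Htel m). lra.
Qed.

Lemma ln_wallis_ratio (m : nat) :
  ln (wallis_ratio m) = ln_fact (2 * m) - 2 * ln_fact m - 2 * INR m * ln 2.
Proof.
  induction m as [|m IH].
  - simpl. rewrite ln_1, ln_fact_0. ring.
  - pose proof (pos_INR m). pose proof (wallis_ratio_pos m).
    replace (2 * S m)%nat with (S (S (2 * m))) by lia.
    rewrite !ln_fact_S. simpl wallis_ratio.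
    rewrite ln_div, ln_mult, IH by nra.
    replace (INR (S (2 * m))) with (2 * INR m + 1)
      by (rewrite S_INR, mult_INR; simpl (INR 2); ring).
    replace (INR (S (S (2 * m)))) with (2 * (INR m + 1))
      by (rewrite !S_INR, mult_INR; simpl (INR 2); ring).
    replace (2 * INR m + 2) with (2 * (INR m + 1)) by ring.
    rewrite S_INR, ln_mult by lra. ring.
Qed.

Lemma ln_wallis_product (n : nat) :
  ln (INR (S n) * wallis_ratio (S n) ^ 2)
  = 2 * stirling_seq (2 * n + 1) - 4 * stirling_seq n + ln 2.
Proof.
  pose proof (pos_INR n). pose proof (wallis_ratio_pos (S n)).
  assert (0 < INR (S n)) by (apply lt_0_INR; lia).
  rewrite ln_mult, <- Rsqr_pow2, Rsqr_def, ln_mult, ln_wallis_ratio by nra.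
  unfold stirling_seq. replace (S (2 * n + 1)) with (2 * S n)%nat by lia.
  rewrite mult_INR. simpl (INR 2). replace (1 + 1) with 2 by ring.
  rewrite ln_mult by lra. field.
Qed.

Lemma stirling_seq_cv : is_lim_seq stirling_seq (ln (2 * PI) / 2).
Proof.
  destruct (ex_finite_lim_seq_decr stirling_seq (11 / 12) stirling_seq_decr stirling_seq_lower)
    as [C HC].
  pose proof PI_RGT_0.
  assert (Hwallis : is_lim_seq (fun n => ln (INR (S n) * wallis_ratio (S n) ^ 2)) (ln (/ PI))).
  { apply is_lim_seq_continuous; [|apply wallis_product].
    apply continuity_pt_ex_derive. auto_derive. apply Rinv_0_lt_compat. lra. }
  assert (Hstirling : is_lim_seq (fun n => ln (INR (S n) * wallis_ratio (S n) ^ 2))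
                        (2 * C - 4 * C + ln 2)).
  { eapply is_lim_seq_ext; [intros n; symmetry; apply ln_wallis_product|].
    apply is_lim_seq_plus'; [|apply is_lim_seq_const].
    apply is_lim_seq_minus'; apply is_lim_seq_mult'; try apply is_lim_seq_const; [|exact HC].
    apply (is_lim_seq_subseq stirling_seq _ (fun n => 2 * n + 1)%nat); [|exact HC].
    apply eventually_subseq. intros; lia. }
  apply is_lim_seq_unique in Hwallis. apply is_lim_seq_unique in Hstirling.
  rewrite Hwallis in Hstirling. injection Hstirling as E.
  rewrite ln_Rinv in E by lra. rewrite ln_mult by lra.
  replace ((ln 2 + ln PI) / 2) with C by lra. exact HC.
Qed.

(** * The integral Psi as a finite sum *)

Lemma is_RInt_vanishing (g : R -> R) (a b : R) :
  (forall t, Rmin a b < t < Rmax a b -> g t = 0) -> is_RInt g a b 0.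
Proof.
  intros Hg. apply (is_RInt_ext (fun _ => 0)); [intros t Ht; symmetry; apply Hg, Ht|].
  pose proof (@is_RInt_const R_NormedModule a b 0) as H0.
  unfold scal in H0; simpl in H0; unfold mult in H0; simpl in H0.
  rewrite Rmult_0_r in H0. exact H0.
Qed.

Lemma is_RInt_sum_f_R0 (g : nat -> R -> R) (v : nat -> R) (a b : R) (N : nat) :
  (forall k, (k <= N)%nat -> is_RInt (g k) a b (v k)) ->
  is_RInt (fun t => sum_f_R0 (fun k => g k t) N) a b (sum_f_R0 v N).
Proof.
  induction N as [|N IH]; intros Hg; simpl; [apply Hg; lia|].
  apply (is_RInt_plus (V := R_NormedModule)); [apply IH; intros k Hk|]; apply Hg; lia.
Qed.

Lemma is_RInt_inv_sq (c a b : R) : -1 < a <= b ->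
  is_RInt (fun t => c / (t + 1) ^ 2) a b (c * (/ (a + 1) - / (b + 1))).
Proof.
  intros Hab.
  replace (c * (/ (a + 1) - / (b + 1))) with (- c / (b + 1) - - c / (a + 1)) by (field; lra).
  apply (is_RInt_derive (fun t => - c / (t + 1))); intros t Ht;
    rewrite Rmin_left, Rmax_right in Ht by lra.
  - auto_derive; [lra|]. field. lra.
  - apply (@ex_derive_continuous R_AbsRing R_NormedModule). auto_derive. nra.
Qed.

Lemma is_RInt_step_inv_sq (j m : nat) (c : R) : (1 <= j)%nat ->
  is_RInt (fun t => (if Rle_dec (INR j) t then c else 0) / (t + 1) ^ 2) 1 (INR m)
    (if le_lt_dec j m then c * (/ (INR j + 1) - / (INR m + 1)) else 0).
Proof.
  intros Hj. assert (Hj1 : 1 <= INR j) by (apply (le_INR 1); lia).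
  assert (Hlow : is_RInt (fun t => (if Rle_dec (INR j) t then c else 0) / (t + 1) ^ 2)
                   1 (INR j) 0).
  { apply is_RInt_vanishing. intros t Ht. rewrite Rmin_left, Rmax_right in Ht by lra.
    destruct (Rle_dec (INR j) t); [lra|]. apply Rmult_0_l. }
  rewrite <- (Rplus_0_l (if le_lt_dec j m then _ else _)).
  apply (is_RInt_Chasles (V := R_NormedModule) _ _ (INR j)); [exact Hlow|].
  destruct (le_lt_dec j m) as [Hjm|Hmj].
  - apply le_INR in Hjm.
    apply (is_RInt_ext (fun t => c / (t + 1) ^ 2)); [|apply is_RInt_inv_sq; lra].
    intros t Ht. rewrite Rmin_left, Rmax_right in Ht by lra.
    destruct (Rle_dec (INR j) t); [reflexivity | lra].
  - apply lt_INR in Hmj. apply is_RInt_vanishing. intros t Ht.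
    rewrite Rmin_right, Rmax_left in Ht by lra.
    destruct (Rle_dec (INR j) t); [lra|]. apply Rmult_0_l.
Qed.

(* The value of [Psi (m + 1)]: the [k]-th summand of the integrand contributes
   [ln (m - k) (1 / (k + 2) - 1 / (m + 1))] when [k + 1 <= m]. *)
Definition psi_term (m k : nat) : R :=
  if le_lt_dec (S k) m
  then ln (INR (S m) - INR (S k)) * (/ (INR (S k) + 1) - / (INR m + 1))
  else 0.

Lemma is_RInt_psi_integrand (m : nat) :
  is_RInt (psi_integrand (S m)) 1 (INR (S m) - 1) (sum_f_R0 (psi_term m) (S m)).
Proof.
  replace (INR (S m) - 1) with (INR m) by (rewrite S_INR; ring).
  apply (is_RInt_ext (fun t => sum_f_R0 (fun k =>
           (if Rle_dec (INR (S k)) t then ln (INR (S m) - INR (S k)) else 0) / (t + 1) ^ 2) (S m))).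
  - intros t _. unfold psi_integrand, Rdiv. rewrite <- scal_sum. apply Rmult_comm.
  - apply is_RInt_sum_f_R0. intros k _. apply is_RInt_step_inv_sq. lia.
Qed.

(** * The rockers function *)

Lemma prod_f_R0_exp (f : nat -> R) (N : nat) :
  prod_f_R0 (fun k => exp (f k)) N = exp (sum_f_R0 f N).
Proof.
  induction N as [|N IH]; simpl; [reflexivity|]. rewrite IH, exp_plus. reflexivity.
Qed.

Lemma exp_ratio (a b c d e : R) :
  exp a * exp b / (exp c * exp d / exp e) = exp (a + b - c - d + e).
Proof.
  unfold Rminus. rewrite !exp_plus, !exp_Ropp.
  pose proof (exp_pos c). pose proof (exp_pos d). pose proof (exp_pos e).
  field. lra.
Qed.

Definition rockers_log_ratio (m : nat) : R :=
  (1 - / INR (S m)) * stirling_seq m - ln (2 * PI) / 2 + ln (INR (S m)) / INR (S m).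

Section LogRockersPlusPsi.

Variable p : nat.

Local Notation m := (S (S p)).
Local Notation F := (fun i => ln (INR m - INR i)).

Lemma log_rockers_sum_reindex :
  sum_f_R0 (fun k => INR k / INR (k + 1) * ln (INR (S m - k))) (S p)
  = sum_f_R0 (fun i => (INR i + 1) / (INR i + 2) * F i) p.
Proof.
  rewrite decomp_sum by lia. simpl pred. simpl (INR 0).
  unfold Rdiv at 1. rewrite !Rmult_0_l, Rplus_0_l. apply sum_eq. intros i Hi.
  rewrite minus_INR by lia. rewrite plus_INR, !S_INR. simpl (INR 0). f_equal.
  - field. pose proof (pos_INR i). lra.
  - f_equal. ring.
Qed.

Lemma psi_sum_reindex :
  sum_f_R0 (psi_term m) (S m)
  = sum_f_R0 (fun i => F i * (/ (INR i + 2) - / INR (S m))) p.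
Proof.
  rewrite tech5, tech5, tech5. unfold psi_term at 2 3 4.
  destruct (le_lt_dec (S (S m)) m) as [|_]; [lia|].
  destruct (le_lt_dec (S m) m) as [|_]; [lia|].
  destruct (le_lt_dec m m) as [_|]; [|lia].
  rewrite (S_INR m), Rplus_minus_l, ln_1, Rmult_0_l, !Rplus_0_r.
  apply sum_eq. intros i Hi. unfold psi_term.
  destruct (le_lt_dec (S i) m) as [_|]; [|lia].
  rewrite !S_INR. f_equal.
  - f_equal. ring.
  - do 2 f_equal. ring.
Qed.

Lemma ln_fact_reindex : ln_fact m = sum_f_R0 F p.
Proof.
  rewrite ln_fact_sum, tech5, (S_INR (S p)), Rplus_minus_l, ln_1. apply Rplus_0_r.
Qed.

Lemma log_rockers_plus_psi :
  sum_f_R0 (fun k => INR k / INR (k + 1) * ln (INR (S m - k))) (S p)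
  + sum_f_R0 (psi_term m) (S m)
  = (1 - / INR (S m)) * ln_fact m.
Proof.
  rewrite log_rockers_sum_reindex, psi_sum_reindex, ln_fact_reindex, <- sum_plus, scal_sum.
  apply sum_eq. intros i _.
  assert (0 < INR (S m)) by (apply lt_0_INR; lia). pose proof (pos_INR i).
  field. lra.
Qed.

Lemma rockers_ratio_exp :
  rockers (S m) / rockers_asym (S m) (sum_f_R0 (psi_term m) (S m))
  = exp (rockers_log_ratio m).
Proof.
  change (rockers (S m)) with
    (INR (S m) * prod_f_R0 (fun k => Rpower (INR (S m - k)) (INR k / INR (k + 1))) (S p)).
  unfold Rpower. rewrite prod_f_R0_exp.
  pose proof log_rockers_plus_psi as Hsum.
  set (L := sum_f_R0 _ (S p)) in *. set (P := sum_f_R0 _ (S m)) in *.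
  set (n := INR (S m)) in *.
  assert (Hn : 0 < n) by (apply lt_0_INR; lia).
  unfold rockers_asym. fold n.
  rewrite <- Rpower_sqrt by (pose proof PI_RGT_0; lra). unfold Rpower.
  rewrite <- (exp_ln n) at 1 by lra. rewrite exp_ratio.
  f_equal. unfold rockers_log_ratio, stirling_seq. fold n. rewrite ln_fact_S. fold n.
  replace (ln n + L - (n - 1 / (2 * n) - 1 / 2) * ln n - / 2 * ln (2 * PI) + (n + P - 1))
    with (ln n + (L + P) - (n - 1 / (2 * n) - 1 / 2) * ln n - / 2 * ln (2 * PI) + (n - 1))
    by ring.
  rewrite Hsum. field. lra.
Qed.

End LogRockersPlusPsi.

Lemma rockers_log_ratio_cv : is_lim_seq rockers_log_ratio 0.
Proof.
  set (K := ln (2 * PI) / 2).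
  assert (Hn : is_lim_seq (fun m => INR (S m)) p_infty).
  { apply (is_lim_seq_incr_1 INR). apply is_lim_seq_INR. }
  assert (Hinv : is_lim_seq (fun m => / INR (S m)) 0).
  { eapply is_lim_seq_ext; [|apply (is_lim_seq_inv_INR_plus 1); lra].
    intros m. rewrite S_INR. reflexivity. }
  assert (Hln : is_lim_seq (fun m => ln (INR (S m)) / INR (S m)) 0).
  { apply (is_lim_comp_seq (fun y => ln y / y) _ p_infty); [apply is_lim_div_ln_p| |exact Hn].
    exists 0%nat. intros; discriminate. }
  assert (H : is_lim_seq rockers_log_ratio ((1 - 0) * K - K + 0)).
  { apply is_lim_seq_plus'; [|exact Hln]. apply is_lim_seq_minus'; [|apply is_lim_seq_const].
    apply is_lim_seq_mult'; [|exact stirling_seq_cv].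
    apply is_lim_seq_minus'; [apply is_lim_seq_const | exact Hinv]. }
  replace ((1 - 0) * K - K + 0) with 0 in H by ring. exact H.
Qed.

Theorem mainTheorem1 :
  (forall n : nat, inhabited (Riemann_integrable (psi_integrand (S n)) 1 (INR (S n) - 1))) /\
  (forall pr : forall n : nat, Riemann_integrable (psi_integrand (S n)) 1 (INR (S n) - 1),
     Un_cv (fun n => rockers (S n) / rockers_asym (S n) (RiemannInt (pr n))) 1).
Proof.
  split.
  - intros n. constructor. apply ex_RInt_Reals_0. eexists. apply is_RInt_psi_integrand.
  - intros pr. apply is_lim_seq_Reals.
    apply (is_lim_seq_ext_loc (fun m => exp (rockers_log_ratio m))).
    + exists 2%nat. intros m Hm. destruct m as [|[|p]]; [lia | lia |].
      rewrite <- RInt_Reals, (is_RInt_unique _ _ _ _ (is_RInt_psi_integrand _)).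
      symmetry. apply rockers_ratio_exp.
    + rewrite <- exp_0. apply is_lim_seq_continuous; [|apply rockers_log_ratio_cv].
      apply continuity_pt_ex_derive. auto_derive. auto.
Qed.
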